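(* A metric formula $\varphi$ is an $\mathrm{MHT}_f$-tautology iff $\sigma(\varphi)$ is an $\mathrm{MHT}_f$-tautology.
   Context: Metric formulas over $\mathcal{A}$: $\varphi ::= p \mid \bot \mid \varphi_1\otimes\varphi_2 \mid \bullet_I\varphi \mid \varphi_1\,\mathsf{S}_I\,\varphi_2 \mid \varphi_1\,\mathsf{T}_I\,\varphi_2 \mid \bigcirc_I\varphi \mid \varphi_1\,\mathsf{U}_I\,\varphi_2 \mid \varphi_1\,\mathsf{R}_I\,\varphi_2$, $\otimes\in\{\to,\wedge,\vee\}$, $I=[m,n)$, $m\in\mathbb{N}$, $n\in\mathbb{N}\cup\{\omega\}$. Derived: $\neg\varphi=\varphi\to\bot$, $\top=\neg\bot$, $\blacksquare_I\varphi=\bot\,\mathsf{T}_I\,\varphi$ (always before), ''eventually before'' $=\top\,\mathsf{S}_I\,\varphi$, $\widehat{\bullet}_I\varphi=\bullet_I\varphi\vee\neg\bullet_I\top$, $\Box_I\varphi=\bot\,\mathsf{R}_I\,\varphi$, $\Diamond_I\varphi=\top\,\mathsf{U}_I\,\varphi$, $\widehat{\bigcirc}_I\varphi=\bigcirc_I\varphi\vee\neg\bigcirc_I\top$. Timed HT-traces $(\langle\mathbf{H},\mathbf{T}\rangle,\tau)$ of length $\lambda$: $H_i\subseteq T_i\subseteq\mathcal{A}$ for $i\in[0,\lambda)$, $\tau:[0,\lambda)\to\mathbb{N}$, $\tau(0)=0$, $\tau(i)\le\tau(i+1)$. Satisfaction at $k$: $\bot$ never; $p$ iff $p\in H_k$;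 $\wedge,\vee$ usual; $\varphi\to\psi$ iff for both $\mathbf{M}'=\mathbf{M}$ and $\mathbf{M}'=(\langle\mathbf{T},\mathbf{T}\rangle,\tau)$, $\mathbf{M}',k\not\models\varphi$ or $\mathbf{M}',k\models\psi$; $\bullet_I\varphi$: $k>0$, $\varphi$ at $k-1$, $\tau(k)-\tau(k-1)\in I$; $\varphi\,\mathsf{S}_I\,\psi$: some $j\in[0,k]$ with $\tau(k)-\tau(j)\in I$, $\psi$ at $j$, $\varphi$ at all $i\in(j,k]$; $\varphi\,\mathsf{T}_I\,\psi$: for all $j\in[0,k]$ with $\tau(k)-\tau(j)\in I$, $\psi$ at $j$ or $\varphi$ at some $i\in(j,k]$; $\bigcirc_I\varphi$: $k+1<\lambda$, $\varphi$ at $k+1$, $\tau(k+1)-\tau(k)\in I$; $\varphi\,\mathsf{U}_I\,\psi$: some $j\in[k,\lambda)$ with $\tau(j)-\tau(k)\in I$, $\psi$ at $j$, $\varphi$ at all $i\in[k,j)$; $\varphi\,\mathsf{R}_I\,\psi$: for all $j\in[k,\lambda)$ with $\tau(j)-\tau(k)\in I$, $\psi$ at $j$ or $\varphi$ at some $i\in[k,j)$. An $\mathrm{MHT}_f$-tautology is a formula satisfied at every $k\in[0,\lambda)$ of every timed HT-trace of finite length $\lambda$. $\sigma(\varphi)$ replaces each connective by its swapped-time version, the pairs being $\mathsf{U}_I/\mathsf{S}_I$, $\mathsf{R}_I/\mathsf{T}_I$, $\bigcirc_I/\bullet_I$, $\widehat{\bigcirc}_I/\widehat{\bullet}_I$,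 $\Box_I/\blacksquare_I$, and $\Diamond_I$ (i.e. $\top\,\mathsf{U}_I\,\cdot$) / eventually before ($\top\,\mathsf{S}_I\,\cdot$). *)

From Stdlib Require Import Arith.

(* Intervals J = [m, n) with m : nat and n : nat ∪ {ω}; ω is encoded by None. *)
Record interval := Itv { itv_lo : nat ; itv_hi : option nat }.

Definition in_itv (J : interval) (d : nat) : Prop :=
  itv_lo J <= d /\ match itv_hi J with None => True | Some n => d < n end.

Inductive formula (A : Type) : Type :=
| Atom  : A -> formula A
| Bot   : formula A
| Impl  : formula A -> formula A -> formula A
| And   : formula A -> formula A -> formula A
| Or    : formula A -> formula A -> formula A
| Prev  : interval -> formula A -> formula A
| Since : interval -> formula A -> formula A -> formula A
| Trig  : interval -> formula A -> formula A -> formula A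
| Next  : interval -> formula A -> formula A
| Until : interval -> formula A -> formula A -> formula A
| Rel   : interval -> formula A -> formula A -> formula A.

Arguments Atom {A} _.
Arguments Bot {A}.
Arguments Impl {A} _ _.
Arguments And {A} _ _.
Arguments Or {A} _ _.
Arguments Prev {A} _ _.
Arguments Since {A} _ _ _.
Arguments Trig {A} _ _ _.
Arguments Next {A} _ _.
Arguments Until {A} _ _ _.
Arguments Rel {A} _ _ _.

Definition Neg {A} (f : formula A) : formula A := Impl f Bot.
Definition Top {A} : formula A := Neg Bot.
Definition AlwaysBefore {A} J (f : formula A) : formula A := Trig J Bot f.
Definition EventuallyBefore {A} J (f : formula A) : formula A := Since J Top f.
Definition WeakPrev {A} J (f : formula A) : formula A := Or (Prev J f) (Neg (Prev J Top)).
Definition Always {A} J (f : formula A) : formula A := Rel J Bot f.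
Definition Eventually {A} J (f : formula A) : formula A := Until J Top f.
Definition WeakNext {A} J (f : formula A) : formula A := Or (Next J f) (Neg (Next J Top)).

(* Satisfaction at position k of the timed HT-trace (<H,T>, tau) of length lam.
   [H] is the "here" component currently in use; implication checks both
   <H,T> and <T,T>. *)
Fixpoint sat {A : Type} (lam : nat) (tau : nat -> nat) (H T : nat -> A -> Prop)
         (k : nat) (f : formula A) {struct f} : Prop :=
  match f with
  | Atom p => H k p
  | Bot => False
  | Impl f1 f2 =>
      (sat lam tau H T k f1 -> sat lam tau H T k f2) /\
      (sat lam tau T T k f1 -> sat lam tau T T k f2)
  | And f1 f2 => sat lam tau H T k f1 /\ sat lam tau H T k f2
  | Or f1 f2 => sat lam tau H T k f1 \/ sat lam tau H T k f2
  | Prev J g => 0 < k /\ sat lam tau H T (k - 1) g /\ in_itv J (tau k - tau (k - 1))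
  | Since J f1 f2 =>
      exists j, j <= k /\ in_itv J (tau k - tau j) /\ sat lam tau H T j f2 /\
        (forall i, j < i -> i <= k -> sat lam tau H T i f1)
  | Trig J f1 f2 =>
      forall j, j <= k -> in_itv J (tau k - tau j) ->
        sat lam tau H T j f2 \/ (exists i, j < i /\ i <= k /\ sat lam tau H T i f1)
  | Next J g => k + 1 < lam /\ sat lam tau H T (k + 1) g /\ in_itv J (tau (k + 1) - tau k)
  | Until J f1 f2 =>
      exists j, k <= j /\ j < lam /\ in_itv J (tau j - tau k) /\ sat lam tau H T j f2 /\
        (forall i, k <= i -> i < j -> sat lam tau H T i f1)
  | Rel J f1 f2 =>
      forall j, k <= j -> j < lam -> in_itv J (tau j - tau k) ->
        sat lam tau H T j f2 \/ (exists i, k <= i /\ i < j /\ sat lam tau H T i f1)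
  end.

(* A timed HT-trace of finite length lam: H_i ⊆ T_i for i < lam, tau(0)=0,
   tau monotone on [0,lam). Values outside [0,lam) are irrelevant. *)
Definition timed_ht_trace {A : Type} (lam : nat) (tau : nat -> nat)
           (H T : nat -> A -> Prop) : Prop :=
  (forall i p, i < lam -> H i p -> T i p) /\
  tau 0 = 0 /\
  (forall i, i + 1 < lam -> tau i <= tau (i + 1)).

Definition MHTf_tautology {A : Type} (f : formula A) : Prop :=
  forall (lam : nat) (tau : nat -> nat) (H T : nat -> A -> Prop),
    timed_ht_trace lam tau H T -> forall k, k < lam -> sat lam tau H T k f.

Fixpoint sigma {A : Type} (f : formula A) : formula A :=
  match f with
  | Atom p => Atom p
  | Bot => Bot
  | Impl f1 f2 => Impl (sigma f1) (sigma f2)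
  | And f1 f2 => And (sigma f1) (sigma f2)
  | Or f1 f2 => Or (sigma f1) (sigma f2)
  | Prev J g => Next J (sigma g)
  | Since J f1 f2 => Until J (sigma f1) (sigma f2)
  | Trig J f1 f2 => Rel J (sigma f1) (sigma f2)
  | Next J g => Prev J (sigma g)
  | Until J f1 f2 => Since J (sigma f1) (sigma f2)
  | Rel J f1 f2 => Trig J (sigma f1) (sigma f2)
  end.

From Stdlib Require Import Arith Lia.

(* Reading a finite trace backwards exchanges past and future: position k of the
   reversed trace is position lam - 1 - k of the original one, and the time
   stamps i |-> tau (lam - 1) - tau (lam - 1 - i) preserve all distances between
   positions, so they again form a timed trace.  Evaluating sigma f at k on the
   reversed trace therefore agrees with evaluating f at lam - 1 - k on the
   original trace.  As reversal maps traces to traces and sigma is an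
   involution, f and sigma f are tautologies together. *)

Lemma sigma_involutive {A} (f : formula A) : sigma (sigma f) = f.
Proof. induction f; simpl; congruence. Qed.

Definition rev_time (lam : nat) (tau : nat -> nat) (i : nat) : nat :=
  tau (lam - 1) - tau (lam - 1 - i).

Definition rev_state {A} (lam : nat) (H : nat -> A -> Prop) (i : nat) : A -> Prop :=
  H (lam - 1 - i).

Definition time_monotone (lam : nat) (tau : nat -> nat) : Prop :=
  forall i j, i <= j -> j < lam -> tau i <= tau j.

(* Positions are paired by [k + m = lam - 1] rather than [m = lam - 1 - k] to keep
   truncated subtraction out of the case analyses. *)
Definition mirror_equiv {A} (lam : nat) (tau : nat -> nat) (g f : formula A) : Prop :=
  forall H T k m, k < lam -> k + m = lam - 1 ->
    (sat lam (rev_time lam tau) (rev_state lam H) (rev_state lam T) k g <->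
     sat lam tau H T m f).

Lemma timed_ht_trace_monotone {A} lam tau (H T : nat -> A -> Prop) :
  timed_ht_trace lam tau H T -> time_monotone lam tau.
Proof.
  intros [_ [_ Hstep]] i j Hij. induction Hij as [|j Hij IH]; intros Hj; [lia|].
  assert (tau j <= tau (j + 1)) by (apply Hstep; lia).
  assert (tau i <= tau j) by (apply IH; lia).
  rewrite Nat.add_1_r in *. lia.
Qed.

Lemma timed_ht_trace_rev {A} lam tau (H T : nat -> A -> Prop) :
  timed_ht_trace lam tau H T ->
  timed_ht_trace lam (rev_time lam tau) (rev_state lam H) (rev_state lam T).
Proof.
  intros Htr. pose proof (timed_ht_trace_monotone _ _ _ _ Htr) as Hmono.
  destruct Htr as [HT _]. unfold rev_time, rev_state. repeat split.
  - intros i p Hi. apply HT. lia.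
  - rewrite Nat.sub_0_r. lia.
  - intros i Hi.
    assert (tau (lam - 1 - (i + 1)) <= tau (lam - 1 - i)) by (apply Hmono; lia).
    assert (tau (lam - 1 - i) <= tau (lam - 1)) by (apply Hmono; lia).
    lia.
Qed.

Section Reversal.

Variables (A : Type) (lam : nat) (tau : nat -> nat).
Hypothesis tau_mono : time_monotone lam tau.

Lemma rev_time_sub a b c d :
  a <= b -> b < lam -> a + c = lam - 1 -> b + d = lam - 1 ->
  rev_time lam tau b - rev_time lam tau a = tau c - tau d.
Proof.
  intros Hab Hb Hac Hbd. unfold rev_time.
  replace (lam - 1 - b) with d by lia. replace (lam - 1 - a) with c by lia.
  assert (tau d <= tau c) by (apply tau_mono; lia).
  assert (tau c <= tau (lam - 1)) by (apply tau_mono; lia).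
  lia.
Qed.

Variables (J : interval) (g1 g2 f1 f2 : formula A).
Hypotheses (E1 : mirror_equiv lam tau g1 f1) (E2 : mirror_equiv lam tau g2 f2).

Lemma mirror_Next_Prev : mirror_equiv lam tau (Next J g1) (Prev J f1).
Proof.
  intros H T k m Hk Hkm; simpl.
  destruct (Nat.lt_ge_cases 0 m) as [Hm | Hm]; [| split; intros [? _]; lia].
  rewrite (E1 H T (k + 1) (m - 1)), (rev_time_sub k (k + 1) m (m - 1)) by lia.
  intuition lia.
Qed.

Lemma mirror_Prev_Next : mirror_equiv lam tau (Prev J g1) (Next J f1).
Proof.
  intros H T k m Hk Hkm; simpl.
  destruct (Nat.lt_ge_cases 0 k) as [Hk0 | Hk0]; [| split; intros [? _]; lia].
  rewrite (E1 H T (k - 1) (m + 1)), (rev_time_sub (k - 1) k (m + 1) m) by lia.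
  intuition lia.
Qed.

Lemma mirror_Until_Since : mirror_equiv lam tau (Until J g1 g2) (Since J f1 f2).
Proof.
  intros H T k m Hk Hkm; simpl. split.
  - intros [j [Hkj [Hj [HJ [Hg2 Hg1]]]]]. exists (lam - 1 - j).
    rewrite (rev_time_sub k j m (lam - 1 - j)) in HJ by lia.
    rewrite (E2 H T j (lam - 1 - j)) in Hg2 by lia.
    refine (conj _ (conj HJ (conj Hg2 _))); [lia |].
    intros i Hji Him. rewrite <- (E1 H T (lam - 1 - i) i) by lia. apply Hg1; lia.
  - intros [j [Hjm [HJ [Hf2 Hf1]]]]. exists (lam - 1 - j).
    rewrite (rev_time_sub k (lam - 1 - j) m j), (E2 H T (lam - 1 - j) j) by lia.
    refine (conj _ (conj _ (conj HJ (conj Hf2 _)))); [lia | lia |].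
    intros i Hki Hij. rewrite (E1 H T i (lam - 1 - i)) by lia. apply Hf1; lia.
Qed.

Lemma mirror_Since_Until : mirror_equiv lam tau (Since J g1 g2) (Until J f1 f2).
Proof.
  intros H T k m Hk Hkm; simpl. split.
  - intros [j [Hjk [HJ [Hg2 Hg1]]]]. exists (lam - 1 - j).
    rewrite (rev_time_sub j k (lam - 1 - j) m) in HJ by lia.
    rewrite (E2 H T j (lam - 1 - j)) in Hg2 by lia.
    refine (conj _ (conj _ (conj HJ (conj Hg2 _)))); [lia | lia |].
    intros i Hmi Hij. rewrite <- (E1 H T (lam - 1 - i) i) by lia. apply Hg1; lia.
  - intros [j [Hmj [Hj [HJ [Hf2 Hf1]]]]]. exists (lam - 1 - j).
    rewrite (rev_time_sub (lam - 1 - j) k j m), (E2 H T (lam - 1 - j) j) by lia.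
    refine (conj _ (conj HJ (conj Hf2 _))); [lia |].
    intros i Hji Hik. rewrite (E1 H T i (lam - 1 - i)) by lia. apply Hf1; lia.
Qed.

Lemma mirror_Rel_Trig : mirror_equiv lam tau (Rel J g1 g2) (Trig J f1 f2).
Proof.
  intros H T k m Hk Hkm; simpl. split.
  - intros Hrel j Hjm HJ.
    rewrite <- (rev_time_sub k (lam - 1 - j) m j) in HJ by lia.
    destruct (Hrel (lam - 1 - j)) as [Hg2 | [i [Hki [Hij Hg1]]]]; try lia; auto.
    + left. rewrite <- (E2 H T (lam - 1 - j) j) by lia. exact Hg2.
    + right. exists (lam - 1 - i). rewrite <- (E1 H T i (lam - 1 - i)) by lia.
      split; [lia | split; [lia | assumption]].
  - intros Htrig j Hkj Hj HJ.
    rewrite (rev_time_sub k j m (lam - 1 - j)) in HJ by lia.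
    destruct (Htrig (lam - 1 - j)) as [Hf2 | [i [Hji [Him Hf1]]]]; try lia; auto.
    + left. rewrite (E2 H T j (lam - 1 - j)) by lia. exact Hf2.
    + right. exists (lam - 1 - i). rewrite (E1 H T (lam - 1 - i) i) by lia.
      split; [lia | split; [lia | assumption]].
Qed.

Lemma mirror_Trig_Rel : mirror_equiv lam tau (Trig J g1 g2) (Rel J f1 f2).
Proof.
  intros H T k m Hk Hkm; simpl. split.
  - intros Htrig j Hmj Hj HJ.
    rewrite <- (rev_time_sub (lam - 1 - j) k j m) in HJ by lia.
    destruct (Htrig (lam - 1 - j)) as [Hg2 | [i [Hji [Hik Hg1]]]]; try lia; auto.
    + left. rewrite <- (E2 H T (lam - 1 - j) j) by lia. exact Hg2.
    + right. exists (lam - 1 - i). rewrite <- (E1 H T i (lam - 1 - i)) by lia.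
      split; [lia | split; [lia | assumption]].
  - intros Hrel j Hjk HJ.
    rewrite (rev_time_sub j k (lam - 1 - j) m) in HJ by lia.
    destruct (Hrel (lam - 1 - j)) as [Hf2 | [i [Hmi [Hij Hf1]]]]; try lia; auto.
    + left. rewrite (E2 H T j (lam - 1 - j)) by lia. exact Hf2.
    + right. exists (lam - 1 - i). rewrite (E1 H T (lam - 1 - i) i) by lia.
      split; [lia | split; [lia | assumption]].
Qed.

End Reversal.

Lemma mirror_sigma {A} lam tau (f : formula A) :
  time_monotone lam tau -> mirror_equiv lam tau (sigma f) f.
Proof.
  intros Hmono. induction f; simpl.
  - intros H T k m Hk Hkm; simpl. unfold rev_state.
    replace (lam - 1 - k) with m by lia. reflexivity.
  - intros H T k m _ _; simpl. reflexivity.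
  - intros H T k m Hk Hkm; simpl.
    rewrite (IHf1 H T k m), (IHf2 H T k m), (IHf1 T T k m), (IHf2 T T k m) by lia.
    reflexivity.
  - intros H T k m Hk Hkm; simpl. rewrite (IHf1 H T k m), (IHf2 H T k m) by lia.
    reflexivity.
  - intros H T k m Hk Hkm; simpl. rewrite (IHf1 H T k m), (IHf2 H T k m) by lia.
    reflexivity.
  - apply mirror_Next_Prev; assumption.
  - apply mirror_Until_Since; assumption.
  - apply mirror_Rel_Trig; assumption.
  - apply mirror_Prev_Next; assumption.
  - apply mirror_Since_Until; assumption.
  - apply mirror_Trig_Rel; assumption.
Qed.

Lemma MHTf_tautology_mirror {A} (g f : formula A) :
  (forall lam tau, time_monotone lam tau -> mirror_equiv lam tau g f) ->
  MHTf_tautology g -> MHTf_tautology f.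
Proof.
  intros Hmirror Hg lam tau H T Htr m Hm.
  apply (Hmirror lam tau (timed_ht_trace_monotone _ _ _ _ Htr) H T (lam - 1 - m) m);
    [lia | lia |].
  apply Hg; [apply timed_ht_trace_rev; exact Htr | lia].
Qed.

Theorem theorem1 (A : Type) (phi : formula A) :
  MHTf_tautology phi <-> MHTf_tautology (sigma phi).
Proof.
  split; apply MHTf_tautology_mirror; intros lam tau Hmono.
  - rewrite <- (sigma_involutive phi) at 1. apply mirror_sigma; exact Hmono.
  - apply mirror_sigma; exact Hmono.
Qed.
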